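(* For every positive integer $k$ there is an edge-coloured digraph $D_k$ with two vertices $u,v$ such that: (I) for every set $S$ of $k$ colours there is a rainbow path from $u$ to $v$ with no edge of colour in $S$; and (II) any two rainbow paths from $u$ to $v$ in $D_k$ have a common edge.
   Context: A path is a sequence of distinct vertices with consecutive vertices joined by directed edges; in an edge-coloured digraph it is rainbow if its edges have pairwise distinct colours. *)

From mathcomp Require Import all_boot.
Set Implicit Arguments. Unset Strict Implicit. Unset Printing Implicit Defensive.

(* A (simple) digraph on a finite vertex type V is an arc relation E : rel V;
   an edge-colouring assigns to each arc (x, y) the colour col x y : nat
   (values of col on non-arcs are irrelevant). *)

Definition is_dpath (V : finType) (E : rel V) (u v : V) (p : seq V) : bool :=
  match p with
  | [::] => false
  | x :: s => [&& x == u, last x s == v, path E x s & uniq p]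
  end.

Definition path_edges (V : finType) (p : seq V) : seq (V * V) :=
  zip p (behead p).

Definition path_colours (V : finType) (col : V -> V -> nat) (p : seq V)
  : seq nat := map (fun e => col e.1 e.2) (path_edges p).

Definition rainbow (V : finType) (col : V -> V -> nat) (p : seq V) : bool :=
  uniq (path_colours col p).

From mathcomp Require Import all_boot zify.
Set Implicit Arguments. Unset Strict Implicit. Unset Printing Implicit Defensive.

(* Take a directed path a_0 -> ... -> a_n (the spine, arc a_j a_(j+1) of
   colour j) and, for every step j and every c <= m, a detour
   a_j -> b_(j,c) -> a_(j+1) coloured with the pair (n + 2c, n + 2c + 1).
   A rainbow a_0-a_n path uses each detour pair at most once, so it makes at
   least n - (m + 1) spine steps; for n > 2(m + 1) two such paths must share a
   spine arc.  Conversely, m + 1 forbidden colours block at most as many spine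
   arcs as they leave detour pairs untouched, so every blocked spine arc can be
   bypassed by its own free detour. *)

Lemma uniq_flatten_map (I T : eqType) (f : I -> seq T) (s : seq I) :
  uniq s -> (forall i, i \in s -> uniq (f i)) ->
  {in s &, forall i j, i != j -> ~~ has (mem (f j)) (f i)} ->
  uniq (flatten (map f s)).
Proof.
elim: s => [|i s IH] //= /andP[i_notin_s s_uniq] f_uniq f_disj.
rewrite cat_uniq f_uniq ?mem_head //= IH //; last first.
- by move=> j k js ks; apply: f_disj; rewrite inE ?js ?ks orbT.
- by move=> j js; apply: f_uniq; rewrite inE js orbT.
rewrite andbT; apply/hasP => -[x /flattenP[_ /mapP[j js ->] xj] xi].
have ij : i != j by apply: contraNneq i_notin_s => ->.
have j_in : j \in i :: s by rewrite inE js orbT.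
have /hasP[] := f_disj i j (mem_head _ _) j_in ij.
by exists x.
Qed.

Lemma has_common_of_size (T : eqType) (s1 s2 r : seq T) :
  uniq s1 -> uniq s2 -> {subset s1 <= r} -> {subset s2 <= r} ->
  size r < size s1 + size s2 -> has (mem s2) s1.
Proof.
move=> s1_uniq s2_uniq s1r s2r; apply: contraTT => disj.
rewrite -leqNgt -size_cat uniq_leq_size //.
  by rewrite cat_uniq s1_uniq s2_uniq has_sym disj.
by move=> x; rewrite mem_cat => /orP[/s1r|/s2r].
Qed.

Lemma increasing_path_uniq (T : eqType) (E : rel T) (f : T -> nat) x s :
  (forall y z, E y z -> f y < f z) -> path E x s -> uniq (x :: s).
Proof.
move=> f_incr xs_path.
have : sorted ltn (map f (x :: s)).
  by rewrite /= path_map; exact: sub_path f_incr _ _ xs_path.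
by move/(sorted_uniq ltn_trans ltnn)/map_uniq.
Qed.

Section PathColours.
Variables (T : finType) (col : T -> T -> nat).

Lemma path_colours_cons x y s :
  path_colours col (x :: y :: s) = col x y :: path_colours col (y :: s).
Proof. by []. Qed.

Lemma path_colours_cat x s t :
  path_colours col (x :: s ++ t) =
  path_colours col (x :: s) ++ path_colours col (last x s :: t).
Proof. by elim: s x => [|y s IH] x //=; rewrite !path_colours_cons IH. Qed.

Lemma size_path_colours x s : size (path_colours col (x :: s)) = size s.
Proof. by rewrite size_map size_zip /=; lia. Qed.

Lemma path_edges_rel (E : rel T) x s e :
  path E x s -> e \in path_edges (x :: s) -> E e.1 e.2.
Proof.
elim: s x => [|y s IH] x //= /andP[xy ys].
by rewrite inE => /orP[/eqP -> //|]; exact: IH.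
Qed.

End PathColours.

Section Gadget.
Variables n m : nat.

(* Spine vertices a_i = inl i, detour vertices b_(j,c) = inr (j, c); the
   b_(n,c) are dead ends, present only so that [inord] applies to j. *)
Definition Dvert : finType := ('I_n.+1 + 'I_n.+1 * 'I_m.+1)%type.

Definition Darc : rel Dvert := fun x y =>
  match x, y with
  | inl a, inl b => val b == (val a).+1
  | inl a, inr jc => val jc.1 == val a
  | inr jc, inl b => val b == (val jc.1).+1
  | inr _, inr _ => false
  end.

Definition Dcol (x y : Dvert) : nat :=
  match x, y with
  | inl a, inl _ => val a
  | inl _, inr jc => n + 2 * val jc.2
  | inr jc, _ => n + 2 * val jc.2 + 1
  end.

Definition Dlevel (x : Dvert) : nat :=
  match x with inl a => 2 * val a | inr jc => (2 * val jc.1).+1 end.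

Definition spine i : Dvert := inl (inord i).
Definition detour j c : Dvert := inr (inord j, inord c).

Lemma Dlevel_spine i : i <= n -> Dlevel (spine i) = 2 * i.
Proof. by move=> le_in; rewrite /= inordK. Qed.

Lemma Dlevel_arc x y : Darc x y -> Dlevel y = Dlevel x + 1 + (Dcol x y < n).
Proof.
case: x => [a|[j c]]; case: y => [b|[j' c']] //= /eqP xy.
- by have := ltn_ord b; lia.
- lia.
- lia.
Qed.

Lemma Dcol_arc_lt x y : Darc x y -> Dcol x y < n + 2 * m.+1.
Proof.
case: x => [a|[j c]]; case: y => [b|[j' c']] //= /eqP xy.
- by have := ltn_ord b; lia.
- by have := ltn_ord c'; lia.
- by have := ltn_ord c; lia.
Qed.

Lemma spine_arcE x y : Darc x y -> Dcol x y < n ->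
  x = spine (Dcol x y) /\ y = spine (Dcol x y).+1.
Proof.
case: x => [a|[j c]]; case: y => [b|[j' c']] //= /eqP xy; try lia.
by rewrite /spine -xy !inord_val.
Qed.

Lemma Dpath_uniq x s : path Darc x s -> uniq (x :: s).
Proof.
by apply: (increasing_path_uniq (f := Dlevel)) => y z /Dlevel_arc ->; lia.
Qed.

Lemma Dlevel_last x s : path Darc x s ->
  Dlevel (last x s) =
  Dlevel x + size s + count (fun c => c < n) (path_colours Dcol (x :: s)).
Proof.
elim: s x => [|y s IH] x; first by rewrite /path_colours /= !addn0.
rewrite last_cons path_colours_cons => /andP[/Dlevel_arc xy /IH ->].
rewrite xy /=; case: (Dcol x y < n); lia.
Qed.

Lemma Drainbow_spine_count s :
  path Darc (spine 0) s -> last (spine 0) s = spine n ->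
  uniq (path_colours Dcol (spine 0 :: s)) ->
  n <= m.+1 + count (fun c => c < n) (path_colours Dcol (spine 0 :: s)).
Proof.
move=> s_path s_last s_rainbow.
(* The path climbs 2n levels: two per spine arc, one per detour arc, and the
   rainbow condition allows at most 2(m + 1) detour arcs. *)
have := Dlevel_last s_path; rewrite s_last !Dlevel_spine //.
set cs := path_colours Dcol _ in s_rainbow *.
have := count_predC (fun c => c < n) cs; rewrite size_path_colours.
have : count (predC (fun c => c < n)) cs <= 2 * m.+1.
  rewrite -size_filter -[2 * m.+1](size_iota n).
  apply: uniq_leq_size; first exact: filter_uniq.
  move=> c; rewrite mem_filter mem_iota /= => /andP[c_ge /mapP[e e_arc c_col]].
  by have := Dcol_arc_lt (path_edges_rel s_path e_arc); rewrite -c_col; lia.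
lia.
Qed.

Lemma spine_colour_edge x s c : path Darc x s -> c < n ->
  c \in path_colours Dcol (x :: s) ->
  (spine c, spine c.+1) \in path_edges (x :: s).
Proof.
move=> s_path c_lt /mapP[e e_edge c_col]; rewrite c_col in c_lt *.
have [e1 e2] := spine_arcE (path_edges_rel s_path e_edge) c_lt.
by rewrite -e2 -e1 -surjective_pairing.
Qed.

Lemma Drainbow_paths_meet p q : 2 * m.+1 < n ->
  is_dpath Darc (spine 0) (spine n) p -> rainbow Dcol p ->
  is_dpath Darc (spine 0) (spine n) q -> rainbow Dcol q ->
  has (fun e => e \in path_edges q) (path_edges p).
Proof.
move=> n_big; case: p => [|x s] //; case: q => [|y t] //.
case/and4P=> /eqP-> /eqP s_last s_path _ s_rainbow.
case/and4P=> /eqP-> /eqP t_last t_path _ t_rainbow.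
set sp := [seq c <- path_colours Dcol (spine 0 :: s) | c < n].
set tp := [seq c <- path_colours Dcol (spine 0 :: t) | c < n].
have spine_sub u : {subset [seq c <- u | c < n] <= iota 0 n}.
  by move=> c; rewrite mem_filter mem_iota => /andP[].
have /hasP[c c_sp c_tp] : has (mem tp) sp.
  apply: has_common_of_size (filter_uniq _ s_rainbow) (filter_uniq _ t_rainbow)
    (spine_sub _) (spine_sub _) _.
  have := Drainbow_spine_count s_path s_last s_rainbow.
  have := Drainbow_spine_count t_path t_last t_rainbow.
  rewrite size_iota !size_filter.
  set cs := count _ (_ (_ :: s)); set ct := count _ (_ (_ :: t)); lia.
move: c_sp (c_tp : c \in tp); rewrite !mem_filter.
move=> /andP[c_lt c_s] /andP[_ c_t].
apply/hasP; exists (spine c, spine c.+1); exact: spine_colour_edge.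
Qed.

Section Routes.
Variables (blocked : pred nat) (det : nat -> nat).
Hypothesis det_lt : forall j, blocked j -> det j < m.+1.
Hypothesis det_inj : {in blocked &, injective det}.

Definition step j : seq Dvert :=
  if blocked j then [:: detour j (det j); spine j.+1] else [:: spine j.+1].

Definition step_colours j : seq nat :=
  if blocked j then [:: n + 2 * det j; n + 2 * det j + 1] else [:: j].

Definition route i r : seq Dvert := flatten [seq step j | j <- iota i r].

Lemma route_cons i r : route i r.+1 = step i ++ route i.+1 r.
Proof. by []. Qed.

Lemma last_step i : last (spine i) (step i) = spine i.+1.
Proof. by rewrite /step; case: blocked. Qed.

Lemma last_route i r : last (spine i) (route i r) = spine (i + r).
Proof.
elim: r i => [|r IH] i; first by rewrite addn0.
by rewrite route_cons last_cat last_step IH addSnnS.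
Qed.

Lemma path_step i : i < n -> path Darc (spine i) (step i).
Proof.
move=> lt_in; rewrite /step; case: ifP => [/det_lt lt_det|_] /=;
  by rewrite !inordK ?eqxx //; lia.
Qed.

Lemma path_route i r : i + r <= n -> path Darc (spine i) (route i r).
Proof.
elim: r i => [|r IH] i le_n //.
by rewrite route_cons cat_path last_step path_step ?IH //; lia.
Qed.

Lemma path_colours_step i : i < n ->
  path_colours Dcol (spine i :: step i) = step_colours i.
Proof.
move=> lt_in; rewrite /step /step_colours; case: ifP => [/det_lt lt_det|_] /=;
  by rewrite /path_colours /= !inordK //; lia.
Qed.

Lemma path_colours_route i r : i + r <= n ->
  path_colours Dcol (spine i :: route i r) =
  flatten [seq step_colours j | j <- iota i r].
Proof.
elim: r i => [|r IH] i le_n //.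
by rewrite route_cons path_colours_cat last_step path_colours_step ?IH //; lia.
Qed.

Lemma route_rainbow i r : i + r <= n ->
  uniq (path_colours Dcol (spine i :: route i r)).
Proof.
move=> le_n; rewrite path_colours_route //.
apply: uniq_flatten_map (iota_uniq _ _) _ _.
  by move=> j _; rewrite /step_colours; case: blocked => //=; rewrite inE; lia.
move=> j j'; rewrite !mem_iota => j_lt j'_lt jj'; rewrite /step_colours.
case: ifP => bj'; case: ifP => bj /=; rewrite ?inE; try lia.
have := contra_neq (det_inj bj bj') jj'; lia.
Qed.

Lemma route_avoid (P : pred nat) i r : i + r <= n ->
  (forall j, j < n -> ~~ blocked j -> P j) ->
  (forall j, blocked j -> P (n + 2 * det j) && P (n + 2 * det j + 1)) ->
  all P (path_colours Dcol (spine i :: route i r)).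
Proof.
move=> le_n P_spine P_detour; rewrite path_colours_route //.
apply/allP => c /flattenP[cs /mapP[j]]; rewrite mem_iota => j_lt ->.
rewrite /step_colours; case: ifP => [/P_detour/andP[P1 P2]|/negbT/P_spine P_j].
  by rewrite !inE => /orP[] /eqP ->.
by rewrite inE => /eqP ->; apply: P_j; lia.
Qed.

End Routes.

Definition free_index (S : seq nat) c :=
  (n + 2 * c \notin S) && (n + 2 * c + 1 \notin S).

Lemma blocked_le_free S : uniq S -> size S <= m.+1 ->
  count (fun j => j \in S) (iota 0 n) <= count (free_index S) (iota 0 m.+1).
Proof.
move=> S_uniq S_size.
(* Blocked spine colours and witnesses of non-free detour indices are
   pairwise distinct elements of S. *)
pose hit c := if n + 2 * c \in S then n + 2 * c else n + 2 * c + 1.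
have hit_inj : injective hit.
  by move=> c c'; rewrite /hit; do 2 case: ifP => _; lia.
set B := [seq j <- iota 0 n | j \in S].
set NF := filter (predC (free_index S)) (iota 0 m.+1).
have : size (B ++ map hit NF) <= size S.
  apply: uniq_leq_size.
    rewrite cat_uniq map_inj_uniq // !filter_uniq ?iota_uniq // andbT /=.
    apply/hasP => -[_ /mapP[c _ ->]]; rewrite mem_filter mem_iota /hit.
    by case: ifP => _; lia.
  move=> x; rewrite mem_cat => /orP[|/mapP[c]].
    by rewrite mem_filter => /andP[].
  rewrite mem_filter /= /free_index negb_and !negbK /hit => /andP[+ _] ->.
  by case: ifP.
have := count_predC (free_index S) (iota 0 m.+1).
rewrite size_cat size_map !size_filter size_iota; lia.
Qed.

Lemma Drainbow_path_avoiding S : uniq S -> size S <= m.+1 ->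
  exists p, [/\ is_dpath Darc (spine 0) (spine n) p, rainbow Dcol p &
                all (fun c => c \notin S) (path_colours Dcol p)].
Proof.
move=> S_uniq S_size.
set B := [seq j <- iota 0 n | j \in S].
set F := [seq c <- iota 0 m.+1 | free_index S c].
have BF : size B <= size F by rewrite !size_filter blocked_le_free.
(* The i-th blocked spine step takes the i-th free detour. *)
pose det j := nth 0 F (index j B).
have det_F j : j \in B -> det j \in F.
  by rewrite -index_mem => j_B; apply: mem_nth; apply: leq_trans BF.
have det_lt j : j \in B -> det j < m.+1.
  by move/det_F; rewrite mem_filter mem_iota => /andP[].
have det_inj : {in B &, injective det}.
  move=> j j' j_B j'_B /eqP; rewrite /det nth_uniq ?filter_uniq ?iota_uniq //.
  - by move/eqP; apply: index_inj.
  - by apply: leq_trans BF; rewrite index_mem.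
  - by apply: leq_trans BF; rewrite index_mem.
exists (spine 0 :: route (fun j => j \in B) det 0 n); split.
- rewrite /is_dpath; apply/and4P; split; rewrite ?last_route ?path_route //.
  exact: Dpath_uniq (path_route det_lt _).
- exact: route_rainbow.
- apply: route_avoid => // j.
    by move=> j_lt; apply: contra => j_S; rewrite mem_filter mem_iota j_S j_lt.
  by move/det_F; rewrite mem_filter => /andP[/andP[-> ->]].
Qed.

End Gadget.

Theorem mainTheorem16 :
  forall k : nat, 0 < k ->
  exists (V : finType) (E : rel V) (col : V -> V -> nat) (u v : V),
    u != v /\
    (* (I) *)
    (forall S : seq nat, uniq S -> size S = k ->
       exists p : seq V, [/\ is_dpath E u v p, rainbow col p &
                            all (fun c => c \notin S) (path_colours col p)]) /\
    (* (II) *)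
    (forall p q : seq V, is_dpath E u v p -> rainbow col p ->
       is_dpath E u v q -> rainbow col q ->
       has (fun e => e \in path_edges q) (path_edges p)).
Proof.
case=> [|m] // _.
pose n := (2 * m.+1).+1.
exists (Dvert n m), (@Darc n m), (@Dcol n m), (spine n m 0), (spine n m n).
split; [|split].
- by apply/eqP => /(congr1 (@Dlevel n m)); rewrite !Dlevel_spine.
- by move=> S S_uniq /eq_leq; apply: Drainbow_path_avoiding.
- by move=> p q; apply: (Drainbow_paths_meet (ltnSn _)).
Qed.
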